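(* Under Assumption A, for every $k\in[K]$, $$\Theta_k-\Theta_0=(H^\top B_k^\top\mathbf e_{i_k})^{\otimes 2}-(H^\top B_0^\top\mathbf e_{i_k})^{\otimes 2}.$$ In particular, $\mathrm{rank}(\Theta_k-\Theta_0)=1$ if $i_k$ is a source node of $\mathcal G$, and $\mathrm{rank}(\Theta_k-\Theta_0)=2$ otherwise.
   Context: Notation: $[d]=\{1,\dots,d\}$, $\mathbf e_i$ standard basis vectors, $\mathbf v^{\otimes 2}:=\mathbf v\mathbf v^\top$, $M^\dagger$ the Moore–Penrose pseudoinverse. Assumption A (model). $\mathcal G$ is a DAG on $[d]$ whose nodes are ordered so that every edge $j\to i$ has $j>i$; a source node has no parents. Contexts $k\in\{0\}\cup[K]$. For each $k$, $A_k\in\mathbb R^{d\times d}$ has zero diagonal and $(A_k)_{ij}=0$ unless $j\to i$ is an edge of $\mathcal G$, and $(A_0)_{ij}\neq 0$ iff $j\to i$ is an edge; $\Omega_k$ is diagonal with positive diagonal; $B_k:=\Omega_k^{-1/2}(I_d-A_k)$. In context $k$, $Z=B_k^{-1}\varepsilon$ with $\mathrm{Cov}(\varepsilon)=I_d$. For each $k\in[K]$ there exist $i_k\in[d]$ and $\mathbf c_k\in\mathbb R^d$ with $B_k=B_0+\mathbf e_{i_k}\mathbf c_k^\top$, and $B_k^\top\mathbf e_{i_k}$ is not a scalar multiple of $B_0^\top\mathbf e_{i_k}$ unless $i_k$ is a source. $G\in\mathbb R^{p\times d}$ ($p\ge d$) has rank $d$, $X=GZ$ in every context, $H:=G^\dagger\in\mathbb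 R^{d\times p}$, normalized so that in each row of $H$ the maximum absolute value of the entries is $1$ and the leftmost entry of absolute value $1$ equals $1$. The precision matrices are $\Theta_k:=\mathbb E[XX^\top]^\dagger=H^\top B_k^\top B_kH$. *)

From HB Require Import structures.
From mathcomp Require Import all_boot all_order all_algebra.
From mathcomp Require Import reals.
Set Implicit Arguments. Unset Strict Implicit. Unset Printing Implicit Defensive.
Import Order.TTheory GRing.Theory Num.Theory.
Local Open Scope ring_scope.

Section Defs.
Variable R : realType.
Variable d : nat.

Definition invsqrt_diag (Om : 'M[R]_d) : 'M[R]_d :=
  \matrix_(i, j) (if i == j then (Num.sqrt (Om i i))^-1 else 0).

Definition Bmat (Om A : 'M[R]_d) : 'M[R]_d := invsqrt_diag Om *m (1%:M - A).

Definition evec (i : 'I_d) : 'cV[R]_d := delta_mx i ord0.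

Definition outer (v : 'cV[R]_d) : 'M[R]_d := v *m v^T.

Definition is_MP_pinv (p : nat) (G : 'M[R]_(p, d)) (H : 'M[R]_(d, p)) : Prop :=
  [/\ G *m H *m G = G, H *m G *m H = H,
      (G *m H)^T = G *m H & (H *m G)^T = H *m G].

Definition rows_normalized (p : nat) (H : 'M[R]_(d, p)) : Prop :=
  forall r : 'I_d, exists j : 'I_p,
    [/\ H r j = 1, (forall j' : 'I_p, `|H r j'| <= 1)
      & (forall j' : 'I_p, (j' < j)%N -> `|H r j'| < 1)].

Definition Theta (p : nat) (H : 'M[R]_(d, p)) (Om A : 'M[R]_d) : 'M[R]_p :=
  H^T *m (Bmat Om A)^T *m Bmat Om A *m H.
End Defs.

(* edge j i  means  j -> i ;  i is a source iff it has no parent *)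
Definition is_source (d : nat) (edge : rel 'I_d) (i : 'I_d) : Prop :=
  forall j : 'I_d, ~~ edge j i.

(** Writing [e := e_(i_k)], the intervention is the rank-one update
    [B_k = B_0 + e c^T] with [e^T e = 1]; expanding the Gram matrices gives
    [B_k^T B_k - B_0^T B_0 = (B_k^T e)(B_k^T e)^T - (B_0^T e)(B_0^T e)^T],
    and conjugating by [H] yields the identity.  Since [G H G = G] and
    [rank G = d], [H] has full row rank, so conjugation by [H] preserves rank.
    A difference [u u^T - v v^T] equals [W D W^T] with [W = (u v)] and
    [D = diag(1, -1)], so it has rank 2 when [u] and [v] are independent.
    When [i_k] is a source, row [i_k] of [B_k] and of [B_0] is [a e^T] and
    [b e^T] with [a, b > 0], so the difference is [(a^2 - b^2) e e^T], of
    rank 1 because [c_k = (a - b) e] is nonzero. *)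
From HB Require Import structures.
From mathcomp Require Import all_boot all_order all_algebra.
From mathcomp Require Import reals.
Set Implicit Arguments.
Unset Strict Implicit.
Unset Printing Implicit Defensive.
Import Order.TTheory GRing.Theory Num.Theory.
Local Open Scope ring_scope.

Section RankOneUpdate.
Variables (F : comPzRingType) (n : nat) (B0 B : 'M[F]_n) (e c : 'cV[F]_n).
Hypotheses (eTe : e^T *m e = 1%:M) (defB : B = B0 + e *m c^T).

Lemma rank_one_update_col : B^T *m e = B0^T *m e + c.
Proof.
by rewrite defB linearD /= trmx_mul trmxK mulmxDl -mulmxA eTe mulmx1.
Qed.

Lemma gram_rank_one_update :
  B^T *m B - B0^T *m B0
    = (B^T *m e) *m (B^T *m e)^T - (B0^T *m e) *m (B0^T *m e)^T.
Proof.
have trB : B^T = B0^T + c *m e^T by rewrite defB linearD /= trmx_mul trmxK.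
rewrite rank_one_update_col [in LHS]trB [in LHS]defB.
rewrite [(_ + c)^T]linearD /= !trmx_mul !trmxK.
rewrite !mulmxDl !mulmxDr !mulmxA -!(mulmxA _ e^T e) eTe !mulmx1.
by rewrite ![_ + _ - _]addrAC !subrr !add0r.
Qed.

End RankOneUpdate.

Section Rank.
Variable F : fieldType.

Lemma row_free_of_ginv m n (G : 'M[F]_(m, n)) (H : 'M_(n, m)) :
  G *m H *m G = G -> \rank G = n -> row_free H.
Proof.
move=> GHG rkG; rewrite /row_free eqn_leq rank_leq_row -{1}rkG -{1}GHG.
exact: leq_trans (mxrankM_maxl _ _) (mxrankM_maxr _ _).
Qed.

Lemma mxrank_congr_row_free m n (H : 'M[F]_(m, n)) (M : 'M_m) :
  row_free H -> \rank (H^T *m M *m H) = \rank M.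
Proof.
by move=> freeH; rewrite mxrankMfree // -mxrank_tr trmx_mul trmxK mxrankMfree
  ?mxrank_tr.
Qed.

Lemma mxrank_outer n (w : 'cV[F]_n) : w != 0 -> \rank (w *m w^T) = 1%N.
Proof.
move=> w_neq0; have rk_w : \rank w = 1%N.
  by apply/eqP; rewrite eqn_leq rank_leq_col lt0n mxrank_eq0.
by rewrite mxrankMfree // /row_free mxrank_tr rk_w.
Qed.

Lemma mxrank_outer_diff_parallel n (w : 'cV[F]_n) (a b : F) :
  w != 0 -> a ^+ 2 != b ^+ 2 ->
  \rank ((a *: w) *m (a *: w)^T - (b *: w) *m (b *: w)^T) = 1%N.
Proof.
move=> w_neq0 ab.
rewrite !linearZ /= -!scalemxAl scalerN !scalerA -scalerBl.
by rewrite mxrank_scale_nz ?mxrank_outer // -!expr2 subr_eq0.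
Qed.

Lemma indep_of_not_parallel n (u v : 'cV[F]_n) :
  v != 0 -> (forall a, u <> a *: v) ->
  forall a b, a *: u + b *: v = 0 -> a = 0 /\ b = 0.
Proof.
move=> v_neq0 u_nparallel a b uv0.
have a0 : a = 0.
  apply/eqP/negPn/negP => a_neq0; apply: (u_nparallel (- (b / a))).
  have -> : u = a^-1 *: (a *: u) by rewrite scalerA mulVf ?scale1r.
  have /eqP -> : a *: u == - (b *: v) by rewrite -addr_eq0 uv0.
  by rewrite scalerN scalerA scaleNr mulrC.
split=> //; move: uv0; rewrite a0 scale0r add0r => /eqP.
by rewrite scalemx_eq0 (negbTE v_neq0) orbF => /eqP.
Qed.

Lemma mxrank_outer_diff_indep n (u v : 'cV[F]_n) :
  (forall a b, a *: u + b *: v = 0 -> a = 0 /\ b = 0) ->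
  \rank (u *m u^T - v *m v^T) = 2.
Proof.
move=> indep.
pose W := row_mx u v; pose D : 'M[F]_(1 + 1) := block_mx 1%:M 0 0 (-1%:M).
have -> : u *m u^T - v *m v^T = W^T^T *m D *m W^T.
  rewrite trmxK mul_row_block !mulmx0 !mulmx1 addr0 add0r tr_row_mx mul_row_col.
  by rewrite mulmxN mulmx1 mulNmx.
have freeWT : row_free W^T.
  apply: inj_row_free => x; rewrite tr_row_mx -[x]hsubmxK mul_row_col.
  rewrite [lsubmx x]mx11_scalar [rsubmx x]mx11_scalar !mul_scalar_mx.
  move=> /(congr1 trmx); rewrite linearD /= !linearZ /= !trmxK trmx0.
  move=> /indep[-> ->].
  by rewrite !raddf0 row_mx0.
have DD : D *m D = 1%:M.
  rewrite mulmx_block !mulmx0 !mul0mx !mulmx1 !addr0 !add0r mulmxN mulmx1 opprK.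
  by rewrite -scalar_mx_block.
rewrite mxrank_congr_row_free //; apply/eqP.
by apply/row_freeP; exists D.
Qed.

End Rank.

Section StructuralEquationModel.
Variables (R : realType) (d : nat).
Implicit Types (Om A B : 'M[R]_d) (i j : 'I_d).

Lemma evec_neq0 i : evec R i != 0.
Proof.
by apply/negP => /eqP/matrixP/(_ i 0); rewrite !mxE !eqxx; apply/eqP/oner_neq0.
Qed.

Lemma trevec_evec i : (evec R i)^T *m evec R i = 1%:M.
Proof.
rewrite /evec trmx_delta mul_delta_mx.
by apply/matrixP => a b; rewrite !ord1 !mxE.
Qed.

Lemma trmx_mul_evecE B i j : (B^T *m evec R i) j 0 = B i j.
Proof. by rewrite /evec -colE !mxE. Qed.

Lemma Bmat_entry Om A i j :
  Bmat Om A i j = (Num.sqrt (Om i i))^-1 * ((i == j)%:R - A i j).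
Proof.
rewrite /Bmat mxE (bigD1 i) //= big1 ?addr0; first by rewrite !mxE eqxx.
by move=> l /negbTE nl; rewrite !mxE eq_sym nl mul0r.
Qed.

Lemma Bmat_row_neq0 Om A i :
  A i i = 0 -> 0 < Om i i -> (Bmat Om A)^T *m evec R i != 0.
Proof.
move=> Aii Om_pos; apply/negP => /eqP/matrixP/(_ i 0).
rewrite trmx_mul_evecE Bmat_entry mxE eqxx Aii subr0 mulr1.
by apply/eqP; rewrite invr_eq0 gt_eqF // sqrtr_gt0.
Qed.

Lemma Bmat_source (edge : rel 'I_d) Om A i :
  (forall j, A i j != 0 -> edge j i) -> is_source edge i ->
  (Bmat Om A)^T *m evec R i = (Num.sqrt (Om i i))^-1 *: evec R i.
Proof.
move=> suppA src; apply/matrixP => j l.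
have Aij : A i j = 0 by apply/eqP; apply: contraNT (src j) => /suppA.
by rewrite ord1 trmx_mul_evecE Bmat_entry Aij subr0 !mxE eqxx andbT eq_sym.
Qed.

Lemma Theta_gram p (H : 'M[R]_(d, p)) Om A :
  Theta H Om A = H^T *m ((Bmat Om A)^T *m Bmat Om A) *m H.
Proof. by rewrite /Theta !mulmxA. Qed.

Lemma outer_mul p (H : 'M[R]_(d, p)) (w : 'cV[R]_d) :
  outer (H^T *m w) = H^T *m (w *m w^T) *m H.
Proof. by rewrite /outer trmx_mul trmxK !mulmxA. Qed.

End StructuralEquationModel.

Theorem proposition1 (R : realType) (d p K : nat) (edge : rel 'I_d)
    (A0 Om0 : 'M[R]_d) (A Om : 'I_K -> 'M[R]_d)
    (ik : 'I_K -> 'I_d) (c : 'I_K -> 'cV[R]_d)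
    (G : 'M[R]_(p, d)) (H : 'M[R]_(d, p))
    (* DAG with topological order: every edge j -> i has j > i *)
    (Hedge : forall i j : 'I_d, edge j i -> (i < j)%N)
    (* context 0 *)
    (HA0diag : forall i : 'I_d, A0 i i = 0)
    (HA0supp : forall i j : 'I_d, (A0 i j != 0) = edge j i)
    (HOm0diag : is_diag_mx Om0)
    (HOm0pos : forall i : 'I_d, 0 < Om0 i i)
    (* contexts k in [K] *)
    (HAdiag : forall (k : 'I_K) (i : 'I_d), A k i i = 0)
    (HAsupp : forall (k : 'I_K) (i j : 'I_d), A k i j != 0 -> edge j i)
    (HOmdiag : forall k : 'I_K, is_diag_mx (Om k))
    (HOmpos : forall (k : 'I_K) (i : 'I_d), 0 < Om k i i)
    (* single-node intervention *)
    (Hint : forall k : 'I_K,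
       Bmat (Om k) (A k) = Bmat Om0 A0 + evec R (ik k) *m (c k)^T)
    (* the intervention genuinely changes the mechanism of node ik k *)
    (Hc : forall k : 'I_K, c k != 0)
    (Hnondeg : forall k : 'I_K, ~ is_source edge (ik k) ->
       forall a : R, (Bmat (Om k) (A k))^T *m evec R (ik k)
                     <> a *: ((Bmat Om0 A0)^T *m evec R (ik k)))
    (* mixing *)
    (Hpd : (d <= p)%N) (HGrank : \rank G = d)
    (HHpinv : is_MP_pinv G H) (HHnorm : rows_normalized H) :
  forall k : 'I_K,
    [/\ Theta H (Om k) (A k) - Theta H Om0 A0
          = outer (H^T *m (Bmat (Om k) (A k))^T *m evec R (ik k))
            - outer (H^T *m (Bmat Om0 A0)^T *m evec R (ik k)),
        is_source edge (ik k) -> \rank (Theta H (Om k) (A k) - Theta H Om0 A0) = 1%N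
      & ~ is_source edge (ik k) -> \rank (Theta H (Om k) (A k) - Theta H Om0 A0) = 2%N].
Proof.
move=> k; set i := ik k; set e := evec R i.
set u := (Bmat (Om k) (A k))^T *m e; set v := (Bmat Om0 A0)^T *m e.
have freeH : row_free H.
  by case: HHpinv => GHG _ _ _; exact: row_free_of_ginv GHG HGrank.
have dTheta : Theta H (Om k) (A k) - Theta H Om0 A0
    = H^T *m (u *m u^T - v *m v^T) *m H.
  rewrite !Theta_gram -mulmxBl -mulmxBr.
  by rewrite (gram_rank_one_update (trevec_evec R i) (Hint k)).
rewrite dTheta mxrank_congr_row_free //; split.
- by rewrite -![H^T *m _ *m e]mulmxA !outer_mul -mulmxBl -mulmxBr.
- move=> src.
  set a := (Num.sqrt (Om k i i))^-1; set b := (Num.sqrt (Om0 i i))^-1.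
  have ua : u = a *: e by apply: Bmat_source => // j; apply: HAsupp.
  have vb : v = b *: e by apply: Bmat_source => // j; rewrite HA0supp.
  have cuv : c k = u - v.
    by rewrite /u (rank_one_update_col (trevec_evec R i) (Hint k)) addrC addKr.
  rewrite ua vb mxrank_outer_diff_parallel ?evec_neq0 //.
  rewrite eqrXn2 ?invr_ge0 ?sqrtr_ge0 //.
  by apply: contraNneq (Hc k) => ab; rewrite cuv ua vb ab subrr.
- move=> nsrc; apply/mxrank_outer_diff_indep/indep_of_not_parallel.
    exact: Bmat_row_neq0.
  exact: Hnondeg.
Qed.
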